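(* Let $f$ be a non-trivial ABC voting rule that satisfies anonymity, neutrality, consistency, continuity, and independence of losers. Then there is a ballot size $r\in\{1,\dots,m-1\}$ such that $f(A^{x,r})=\{W\in\mathcal W_k:x\in W\}$ and $f(A^{-x,r})=\{W\in\mathcal W_k:x\notin W\}$ for all candidates $x\in\mathcal C$.
   Context: Let $\mathcal C=\{c_1,\dots,c_m\}$ be a set of $m\ge 2$ candidates and $\mathbb N=\{1,2,\dots\}$ the set of potential voters. An approval ballot is a non-empty subset of $\mathcal C$; $\mathcal A$ is the set of all ballots. A profile is a map $A:N_A\to\mathcal A$ for a non-empty finite electorate $N_A\subseteq\mathbb N$; $\mathcal A^*$ is the set of profiles. For disjoint electorates $A+A'$ is the union profile, and $\lambda A$ consists of $\lambda$ copies of $A$ on disjoint voter sets. Fix $k\in\{1,\dots,m-1\}$; $\mathcal W_k$ is the set of $k$-element subsets of $\mathcal C$. An ABC voting rule is a map $f:\mathcal A^*\to2^{\mathcal W_k}\setminus\{\emptyset\}$; it is trivial if $f(A)=\mathcal W_k$ for every profile $A$, and non-trivial otherwise. Anonymity: invariance under renaming voters. Neutrality: $f(\tau(A))=\{\tau(W):W\in f(A)\}$ for every permutation $\tau$ of $\mathcal C$ ($\tau(A)_i=\tau(A_i)$). Consistency: $f(A+A')=f(A)\cap f(A')$ for disjoint $A,A'$ with non-empty intersection of outcomes. Continuity: for all $A,A'$ there is $\lambda\in\mathbb N$ with $f(\lambda A+A')\subseteq f(A)$. Independence of losers: $W\in f(A)$ implies $W\in f(A')$ whenever $N_A=N_{A'}$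 and, for all voters $i$, $A'_i\subseteq A_i$ and $W\cap A'_i=W\cap A_i$. For $x\in\mathcal C$ and $r\in\{1,\dots,m\}$, $A^{x,r}$ is the profile in which every ballot $S\in\mathcal A$ with $|S|=r$ and $x\in S$ is reported by exactly one voter (and no other ballots appear), and $A^{-x,r}$ is the profile in which every ballot $S$ with $|S|=r$ and $x\notin S$ is reported by exactly one voter. *)

(* Candidates C = 'I_m, voters = positive naturals,
   profiles = finite maps from voters to approval ballots. *)
From mathcomp Require Import all_boot all_order.
From mathcomp Require Import fingroup perm.
From mathcomp Require Import finmap.
Set Implicit Arguments. Unset Strict Implicit. Unset Printing Implicit Defensive.
Local Open Scope fset_scope.
Local Open Scope fmap_scope.

Definition profile (m : nat) := {fmap nat -> {set 'I_m}}.

Definition valid_profile m (A : profile m) : Prop :=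
  (exists i, i \in domf A) /\ (0 \notin domf A) /\
  (forall i S, A.[? i] = Some S -> S != set0).

Definition committees m (k : nat) : {set {set 'I_m}} := [set W : {set 'I_m} | #|W| == k].

(* f is an ABC voting rule (its values on non-profiles are irrelevant) *)
Definition is_ABC_rule m k (f : profile m -> {set {set 'I_m}}) : Prop :=
  forall A, valid_profile A -> f A \subset committees m k /\ f A != set0.

Definition nontrivial m k (f : profile m -> {set {set 'I_m}}) : Prop :=
  exists A, valid_profile A /\ f A <> committees m k.

Definition is_renaming m (A B : profile m) (sigma : nat -> nat) : Prop :=
  {in domf A &, injective sigma} /\
  (forall v, (v \in domf B) <-> exists2 i, i \in domf A & v = sigma i) /\
  (forall i, i \in domf A -> B.[? sigma i] = A.[? i]).

Definition anonymous m (f : profile m -> {set {set 'I_m}}) : Prop :=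
  forall A B sigma, valid_profile A -> valid_profile B ->
    is_renaming A B sigma -> f B = f A.

Definition is_cand_perm m (tau : {perm 'I_m}) (A B : profile m) : Prop :=
  (forall v, (v \in domf B) = (v \in domf A)) /\
  (forall i S, A.[? i] = Some S -> B.[? i] = Some (tau @: S)).

Definition neutral m (f : profile m -> {set {set 'I_m}}) : Prop :=
  forall (tau : {perm 'I_m}) A B, valid_profile A -> valid_profile B ->
    is_cand_perm tau A B -> f B = [set tau @: W | W : {set 'I_m} in f A].

Definition is_union m (A A' B : profile m) : Prop :=
  (forall v, v \in domf A -> v \notin domf A') /\
  (forall v, (v \in domf B) = (v \in domf A) || (v \in domf A')) /\
  (forall i, i \in domf A -> B.[? i] = A.[? i]) /\
  (forall i, i \in domf A' -> B.[? i] = A'.[? i]).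

Definition consistent m (f : profile m -> {set {set 'I_m}}) : Prop :=
  forall A A' B, valid_profile A -> valid_profile A' -> valid_profile B ->
    is_union A A' B -> f A :&: f A' != set0 -> f B = f A :&: f A'.

(* B = lambda A + A': voter i of the j-th copy of A (j < lambda) is sigma j i;
   the copies and A' live on pairwise disjoint voter sets *)
Definition is_multi_union m (lambda : nat) (A A' B : profile m)
    (sigma : nat -> nat -> nat) : Prop :=
  (forall j i j' i', j < lambda -> j' < lambda -> i \in domf A -> i' \in domf A ->
     sigma j i = sigma j' i' -> j = j' /\ i = i') /\
  (forall j i, j < lambda -> i \in domf A -> sigma j i \notin domf A') /\
  (forall v, (v \in domf B) <->
     (v \in domf A' \/ exists j i, [/\ j < lambda, i \in domf A & v = sigma j i])) /\
  (forall j i, j < lambda -> i \in domf A -> B.[? sigma j i] = A.[? i]) /\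
  (forall i, i \in domf A' -> B.[? i] = A'.[? i]).

Definition continuous m (f : profile m -> {set {set 'I_m}}) : Prop :=
  forall A A', valid_profile A -> valid_profile A' ->
    exists2 lambda, 0 < lambda &
      forall B sigma, valid_profile B -> is_multi_union lambda A A' B sigma ->
        f B \subset f A.

Definition indep_losers m (f : profile m -> {set {set 'I_m}}) : Prop :=
  forall A A' W, valid_profile A -> valid_profile A' ->
    (forall v, (v \in domf A') = (v \in domf A)) ->
    (forall i S S', A.[? i] = Some S -> A'.[? i] = Some S' ->
       S' \subset S /\ W :&: S' = W :&: S) ->
    W \in f A -> W \in f A'.

(* A is (a copy of) A^{x,r}: each ballot S with |S| = r and x in S is
   reported by exactly one voter, and no other ballot appears *)
Definition is_Axr m (x : 'I_m) (r : nat) (A : profile m) : Prop :=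
  (forall i j S, A.[? i] = Some S -> A.[? j] = Some S -> i = j) /\
  (forall S, (exists i, A.[? i] = Some S) <-> (#|S| = r /\ x \in S)).

Definition is_Anxr m (x : 'I_m) (r : nat) (A : profile m) : Prop :=
  (forall i j S, A.[? i] = Some S -> A.[? j] = Some S -> i = j) /\
  (forall S, (exists i, A.[? i] = Some S) <-> (#|S| = r /\ x \notin S)).

From mathcomp Require Import all_boot all_order.
From mathcomp Require Import fingroup perm.
From mathcomp Require Import finmap.
From mathcomp Require Import zify.

(** By neutrality, [f(A^{x,r})] is invariant under the permutations fixing [x],
    so it is [{W | x \in W}], [{W | x \notin W}] or all committees; likewise for
    [f(A^{-x,r})].  Since [A^{x,r} + A^{-x,r}] is the fully symmetric profile of
    all [r]-ballots, consistency makes the two outcomes either disjoint or both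
    equal to all committees.

    Suppose no [r] separates.  Independence of losers turns [A^{x,r}] into
    [A^{-x,r-1}] by deleting [x] from every ballot, and [f(A^{x,m})] is all
    committees; a downward induction on [r] then shows that every [f(A^{x,r})]
    is all committees.  An upward induction on [#|S|], again deleting candidates
    outside a committee [W] from ballots of [A^{x,r}] and splitting the result
    into single voters by consistency, shows that every single-ballot profile
    is a tie; by consistency so is every profile, contradicting non-triviality. *)

Set Implicit Arguments. Unset Strict Implicit. Unset Printing Implicit Defensive.
Local Open Scope fmap_scope.
(* Only [A.[? i]] is wanted from [fmap_scope], not its [+]. *)
Local Open Scope nat_scope.

Lemma enum_eq_nil (T : finType) (A : {set T}) : (enum A == [::]) = (A == set0).
Proof. by rewrite -size_eq0 -cardE cards_eq0. Qed.

Section SeqProfile.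
Variable m : nat.
Implicit Types (L : seq {set 'I_m}) (S : {set 'I_m}).

Fixpoint seq_profile (n : nat) L : profile m :=
  if L is X :: L' then (seq_profile n.+1 L').[n <- X] else [fmap].

Lemma fnd_seq_profile n L (i : nat) : (seq_profile n L).[? i] =
  if n <= i < n + size L then Some (nth set0 L (i - n)) else None.
Proof.
elim: L n => [|X L IH] n /=.
  by rewrite fnd_fmap0; case: ifP => // /andP[]; lia.
rewrite fnd_set IH; case: (eqVneq i n) => [->|ne].
  by rewrite leqnn subnn /=; case: ifP => //; lia.
have [lt|ge] := ltnP n i; last by rewrite ifF ?ifF //; lia.
have -> : i - n = (i - n.+1).+1 by lia.
by rewrite /=; case: ifP => ?; case: ifP => ? //; lia.
Qed.

Lemma mem_seq_profile n L (i : nat) :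
  (i \in domf (seq_profile n L)) = (n <= i < n + size L).
Proof. by rewrite -fndSome fnd_seq_profile; case: ifP. Qed.

Lemma seq_profile_ballot n L (i : nat) S :
  (seq_profile n L).[? i] = Some S -> S \in L.
Proof.
rewrite fnd_seq_profile; case: ifP => // /andP[ni iL] [<-].
by apply: mem_nth; rewrite ltn_subLR.
Qed.

Lemma exists_seq_profile_ballot n L S :
  S \in L -> exists i, (seq_profile n L).[? i] = Some S.
Proof.
move=> SL; exists (n + index S L); rewrite fnd_seq_profile leq_addr /=.
by rewrite ltn_add2l index_mem SL addKn nth_index.
Qed.

Definition distinct_ballots (A : profile m) :=
  forall i j S, A.[? i] = Some S -> A.[? j] = Some S -> i = j.

Lemma distinct_ballots_seq_profile n L : uniq L -> distinct_ballots (seq_profile n L).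
Proof.
move=> L_uniq i j S; rewrite !fnd_seq_profile.
case: ifP => // /andP[ni iL]; case: ifP => // /andP[nj jL] [<-] [] /eqP.
by rewrite nth_uniq ?ltn_subLR // => /eqP; lia.
Qed.

Lemma valid_seq_profile n L :
  0 < n -> L != [::] -> set0 \notin L -> valid_profile (seq_profile n L).
Proof.
move=> n_gt0 L_nil L0; split; last split.
- by exists n; rewrite mem_seq_profile; case: L L_nil {L0} => //= S L _; lia.
- by rewrite mem_seq_profile; lia.
- by move=> i S /seq_profile_ballot SL; apply: contraNneq L0 => <-.
Qed.

Lemma seq_profile_cat n L1 L2 :
  is_union (seq_profile n L1) (seq_profile (n + size L1) L2) (seq_profile n (L1 ++ L2)).
Proof.
split; last split; last split.
- by move=> v; rewrite !mem_seq_profile; lia.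
- by move=> v; rewrite !mem_seq_profile size_cat; lia.
- move=> i; rewrite mem_seq_profile => iL1; rewrite !fnd_seq_profile size_cat.
  by rewrite !ifT ?nth_cat ?ifT //; lia.
- move=> i; rewrite mem_seq_profile => iL2; rewrite !fnd_seq_profile size_cat.
  rewrite !ifT ?nth_cat ?ifF; try lia.
  by congr (Some (nth _ _ _)); lia.
Qed.

Lemma fnd_seq_profile_map n L (g : {set 'I_m} -> {set 'I_m}) (i : nat) S :
  (seq_profile n L).[? i] = Some S -> (seq_profile n (map g L)).[? i] = Some (g S).
Proof.
rewrite !fnd_seq_profile size_map; case: ifP => // /andP[ni iL] [<-].
by rewrite (nth_map set0) //; lia.
Qed.

Lemma mem_seq_profile_map n L (g : {set 'I_m} -> {set 'I_m}) (i : nat) :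
  (i \in domf (seq_profile n (map g L))) = (i \in domf (seq_profile n L)).
Proof. by rewrite !mem_seq_profile size_map. Qed.

Definition family_profile (B : {set {set 'I_m}}) := seq_profile 1 (enum B).

Lemma valid_seq_profile1 n S : 0 < n -> S != set0 -> valid_profile (seq_profile n [:: S]).
Proof. by move=> n_gt0 S0; apply: valid_seq_profile; rewrite // inE eq_sym. Qed.

Lemma valid_seq_profile_of_set n L (B : {set {set 'I_m}}) : 0 < n -> L =i B ->
  B != set0 -> set0 \notin B -> valid_profile (seq_profile n L).
Proof.
move=> n_gt0 LB /set0Pn[S SB] B0; apply: valid_seq_profile; rewrite ?LB //.
by apply: contraTneq SB => L_nil; rewrite -LB L_nil.
Qed.

Lemma valid_family_profile (B : {set {set 'I_m}}) :
  B != set0 -> set0 \notin B -> valid_profile (family_profile B).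
Proof. exact: valid_seq_profile_of_set (mem_enum B). Qed.

End SeqProfile.

Section CandidateSets.
Variable m : nat.
Implicit Types (A B S W : {set 'I_m}) (t : {perm 'I_m}) (X : {set {set 'I_m}}).

Lemma mem_im_perm t A z : (z \in t @: A) = ((t^-1)%g z \in A).
Proof. by rewrite -preim_permV inE. Qed.

Lemma im_permK t A : (t^-1)%g @: (t @: A) = A.
Proof. by apply/setP => z; rewrite !mem_im_perm invgK permK. Qed.

Lemma im_permKV t A : t @: ((t^-1)%g @: A) = A.
Proof. by apply/setP => z; rewrite !mem_im_perm invgK permKV. Qed.

Lemma card_im_perm t A : #|t @: A| = #|A|.
Proof. by rewrite card_imset //; exact: perm_inj. Qed.

Definition relabel t X := [set t @: W | W : {set 'I_m} in X].

Lemma mem_relabel t X W : (W \in relabel t X) = ((t^-1)%g @: W \in X).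
Proof.
apply/imsetP/idP => [[W0 W0X ->]|WX]; first by rewrite im_permK.
by exists ((t^-1)%g @: W); rewrite ?im_permKV.
Qed.

Lemma exists_subset_card A n : n <= #|A| -> exists2 B : {set 'I_m}, B \subset A & #|B| = n.
Proof.
elim: n => [|n IH] nA; first by exists set0; rewrite ?sub0set ?cards0.
have [B BA cB] := IH (ltnW nA).
have [y] : exists y, y \in A :\: B.
  by apply/set0Pn; rewrite -cards_eq0 cardsD (setIidPr BA); lia.
rewrite inE => /andP[yB yA].
by exists (y |: B); rewrite ?subUset ?sub1set ?yA ?BA // cardsU1 yB cB.
Qed.

(* Transposing a point of [A :\: B] with one of [B :\: A] decreases [#|A :\: B|]. *)
Lemma exists_perm_im A B : #|A| = #|B| -> exists t : {perm 'I_m},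
  t @: A = B /\ forall z, (z \in A) = (z \in B) -> t z = z.
Proof.
move: {2}#|A :\: B| (erefl #|A :\: B|) => n.
elim: n A => [|n IH] A cAB cA.
  have AB : A \subset B by rewrite -setD_eq0 -cards_eq0 cAB.
  have -> : A = B by apply/eqP; rewrite eqEcard AB cA /=.
  by exists 1%g; split => [|z _]; rewrite ?imset_perm1 ?perm1.
have [a] : exists a, a \in A :\: B by apply/set0Pn; rewrite -cards_eq0 cAB.
have [b] : exists b, b \in B :\: A.
  by apply/set0Pn; rewrite -cards_eq0 cardsD setIC -cA -cardsD cAB.
rewrite !inE => /andP[bA bB] /andP[aB aA].
have ab : a != b by apply: contraNneq aB => ->.
have memA1 z : (z \in tperm a b @: A) =
    if z == a then false else if z == b then true else z \in A.
  rewrite mem_im_perm tpermV; case: tpermP => [->|->|za zb].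
  - by rewrite eqxx (negPf bA).
  - by rewrite eqxx eq_sym (negPf ab).
  - by rewrite (introF eqP za) (introF eqP zb).
have cA1 : #|(tperm a b @: A) :\: B| = n.
  have -> : (tperm a b @: A) :\: B = (A :\: B) :\ a.
    apply/setP => z; rewrite !inE memA1.
    by case: (eqVneq z a) => //= za; case: (eqVneq z b) => [->|zb] /=; rewrite ?bB ?andbF.
  by move: (cardsD1 a (A :\: B)); rewrite cAB !inE aA aB; lia.
have [t2 [t2A t2f]] := IH _ cA1 (etrans (card_im_perm _ _) cA).
exists (tperm a b * t2)%g; split.
  by rewrite -t2A -imset_comp; apply: eq_imset => z; rewrite permM.
move=> z zAB; rewrite permM.
have za : z != a by apply: contra_eq_neq zAB => ->; rewrite aA (negPf aB).
have zb : z != b by apply: contra_eq_neq zAB => ->; rewrite bB (negPf bA).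
by rewrite tpermD 1?eq_sym // t2f // memA1 (negPf za) (negPf zb).
Qed.

Lemma exists_card_mem x r : 0 < r <= m -> exists2 S : {set 'I_m}, #|S| = r & x \in S.
Proof.
move=> r_bounds; have [S Sx cS] : exists2 S : {set 'I_m}, S \subset [set~ x] & #|S| = r.-1.
  by apply: exists_subset_card; rewrite cardsC1 card_ord; lia.
have xS : x \notin S by apply: contraTN Sx => xS; apply/subsetPn; exists x; rewrite ?inE ?eqxx.
by exists (x |: S); rewrite ?setU11 // cardsU1 xS cS; lia.
Qed.

Lemma exists_card_notin x r : r <= m - 1 -> exists2 S : {set 'I_m}, #|S| = r & x \notin S.
Proof.
move=> rm; have [S Sx cS] : exists2 S : {set 'I_m}, S \subset [set~ x] & #|S| = r.
  by apply: exists_subset_card; rewrite cardsC1 card_ord; lia.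
by exists S => //; apply: contraTN Sx => xS; apply/subsetPn; exists x; rewrite ?inE ?eqxx.
Qed.

Lemma eq_setT_card S : m <= #|S| -> S = setT.
Proof. by move=> mS; apply/eqP; rewrite eqEcard subsetT cardsT card_ord. Qed.

End CandidateSets.

Section DropOutside.
Variable T : finType.
Implicit Types A U : {set T}.

Definition drop_outside U A := if [pick y in A :\: U] is Some y then A :\ y else A.

Lemma drop_outside_sub U A : drop_outside U A \subset A.
Proof. by rewrite /drop_outside; case: pickP => [y _|_]; rewrite ?subD1set. Qed.

Lemma setI_drop_outside U A : U :&: drop_outside U A = U :&: A.
Proof.
rewrite /drop_outside; case: pickP => [y|//]; rewrite !inE => /andP[yU _].
by apply/setP => z; rewrite !inE; case: eqVneq => // ->; rewrite (negPf yU).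
Qed.

Lemma card_drop_outside U A : ~~ (A \subset U) -> #|drop_outside U A| = #|A|.-1.
Proof.
rewrite /drop_outside; case: pickP => [y|none /subsetPn[z zA zU]].
  by rewrite !inE => /andP[_ yA] _; rewrite (cardsD1 y A) yA.
by have := none z; rewrite !inE zA zU.
Qed.

End DropOutside.

Section Rule.
Variables (m k : nat) (f : profile m -> {set {set 'I_m}}).
Hypotheses (m_ge2 : 2 <= m) (k_bounds : 1 <= k <= m - 1) (f_ABC : is_ABC_rule k f).
Hypotheses (f_anon : anonymous f) (f_neutral : neutral f).
Hypotheses (f_consistent : consistent f) (f_indep : indep_losers f).

Local Notation comm := (committees m k).
Local Notation seq_profile := (@seq_profile m).
Implicit Types (L : seq {set 'I_m}) (S T U W : {set 'I_m}) (B X : {set {set 'I_m}}).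
Implicit Types (t : {perm 'I_m}) (x : 'I_m).

Lemma exists_comm_mem x : exists2 W, W \in comm & x \in W.
Proof.
have [|W cW xW] := @exists_card_mem m x k; first by lia.
by exists W; rewrite ?inE ?cW.
Qed.

Lemma exists_comm_notin x : exists2 W, W \in comm & x \notin W.
Proof.
have [W cW xW] := exists_card_notin x (proj2 (andP k_bounds)).
by exists W; rewrite ?inE ?cW.
Qed.

Lemma f_sub_comm A : valid_profile A -> f A \subset comm.
Proof. by case/f_ABC. Qed.

Lemma f_neq0 A : valid_profile A -> f A != set0.
Proof. by case/f_ABC. Qed.

Lemma f_reindex A L (g : nat -> nat) : valid_profile A ->
    {in domf A &, injective g} ->
    (forall j, j < size L -> exists2 i, i \in domf A & g i = j) ->
    (forall i, i \in domf A -> g i < size L /\ A.[? i] = Some (nth set0 L (g i))) ->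
  f A = f (seq_profile 1 L).
Proof.
move=> vA g_inj g_onto gA; case: (vA) => [[i0 i0A] [_ A_ne]].
have vL : valid_profile (seq_profile 1 L).
  apply: valid_seq_profile => //; first by have [+ _] := gA _ i0A; case: (L).
  apply/negP => /(nthP set0) [j jL Lj0]; have [i iA gij] := g_onto j jL.
  by have [_ /A_ne] := gA i iA; rewrite gij Lj0 eqxx.
apply/esym/(f_anon (sigma := fun i => (g i).+1)) => //.
split; [by move=> i j iA jA [] /(g_inj _ _ iA jA) | split].
- move=> v; rewrite mem_seq_profile; split.
    by move=> vL'; have [|i iA gi] := g_onto v.-1; [lia | exists i => //; lia].
  by case=> i iA ->; have [gi _] := gA i iA; lia.
- move=> i iA; have [gi ->] := gA i iA.
  by rewrite fnd_seq_profile ifT ?subn1 //; lia.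
Qed.

Lemma f_seq_profile_shift n L : 0 < n -> L != [::] -> set0 \notin L ->
  f (seq_profile n L) = f (seq_profile 1 L).
Proof.
move=> n_gt0 L_nil L0; apply: (f_reindex (g := fun i => i - n)).
- exact: valid_seq_profile.
- by move=> i j; rewrite !mem_seq_profile; lia.
- by move=> j jL; exists (j + n); rewrite ?mem_seq_profile; lia.
- move=> i; rewrite mem_seq_profile => iL; rewrite fnd_seq_profile ifT //.
  by split=> //; lia.
Qed.

Lemma f_distinct_ballots A B : valid_profile A -> distinct_ballots A ->
  (forall S, (exists i, A.[? i] = Some S) <-> S \in B) -> f A = f (family_profile B).
Proof.
move=> vA A_uniq AB; pose ballot i := odflt set0 A.[? i].
have ballotE i : i \in domf A -> A.[? i] = Some (ballot i).
  by rewrite -fndSome /ballot; case: (A.[? i]).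
have ballotB i : i \in domf A -> ballot i \in enum B.
  by move/ballotE => Ai; rewrite mem_enum -AB; exists i.
apply: (f_reindex (g := fun i => index (ballot i) (enum B))) => //.
- move=> i j iA jA e; apply: (A_uniq i j (ballot i)); rewrite ?ballotE //.
  by rewrite -(nth_index set0 (ballotB i iA)) e nth_index ?ballotB.
- move=> j jB; have /AB [i Ai] : nth set0 (enum B) j \in B by rewrite -mem_enum mem_nth.
  have iA : i \in domf A by rewrite -fndSome Ai.
  by exists i; rewrite // /ballot Ai index_uniq ?enum_uniq.
- by move=> i iA; rewrite index_mem nth_index ballotB // ballotE.
Qed.

Definition ballots (A : profile m) := [seq odflt set0 A.[? i] | i <- domf A].

Lemma f_ballots A : valid_profile A -> f A = f (seq_profile 1 (ballots A)).
Proof.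
move=> vA; apply: (f_reindex (g := fun i => index i (domf A))) => //.
- by move=> i j iA jA /(congr1 (nth 0 (domf A))); rewrite !nth_index.
- move=> j; rewrite size_map => jA; exists (nth 0 (domf A) j).
    exact: mem_nth.
  exact: index_uniq (fset_uniq _).
- move=> i iA; rewrite size_map index_mem iA (nth_map 0) ?index_mem // nth_index //.
  by split=> //; move: iA; rewrite -fndSome; case: (A.[? i]).
Qed.

Lemma ballots_neq0 A S : valid_profile A -> S \in ballots A -> S != set0.
Proof.
case=> _ [_ A_ne] /mapP [i iA ->]; move: iA; rewrite -fndSome.
by case Ai: (A.[? i]) => [T|] // _; exact: A_ne Ai.
Qed.

Definition f_single S := f (seq_profile 1 [:: S]).

Lemma f_seq_profile_bigcap L : L != [::] -> set0 \notin L ->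
  \bigcap_(S <- L) f_single S != set0 ->
  f (seq_profile 1 L) = \bigcap_(S <- L) f_single S.
Proof.
elim: L => [//|S L IH] _; rewrite inE negb_or eq_sym big_cons => /andP[S0 L0].
case: L IH L0 => [_ _ _|T L IH L0 cap]; first by rewrite big_nil setIT.
have capL : \bigcap_(U <- T :: L) f_single U != set0.
  by apply: contraNneq cap => ->; rewrite setI0.
have vS := valid_seq_profile1 (ltn0Sn 0) S0.
have vL : valid_profile (seq_profile 2 (T :: L)) by exact: valid_seq_profile.
have vSL : valid_profile (seq_profile 1 (S :: T :: L)).
  by apply: valid_seq_profile; rewrite // inE negb_or eq_sym S0.
rewrite -IH // -(@f_seq_profile_shift 2) // in cap *.
exact: f_consistent vS vL vSL (seq_profile_cat 1 [:: S] (T :: L)) cap.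
Qed.

Lemma f_family_seq_profile n L B : 0 < n -> uniq L -> L =i B ->
  B != set0 -> set0 \notin B -> f (seq_profile n L) = f (family_profile B).
Proof.
move=> n_gt0 L_uniq LB B_neq0 B0; apply: f_distinct_ballots.
- exact: valid_seq_profile_of_set LB B_neq0 B0.
- exact: distinct_ballots_seq_profile.
- move=> S; rewrite -LB; split; first by case=> i /seq_profile_ballot.
  exact: exists_seq_profile_ballot.
Qed.

Lemma f_family_relabel t B : B != set0 -> set0 \notin B ->
  f (family_profile (relabel t B)) = relabel t (f (family_profile B)).
Proof.
move=> B_neq0 B0; have vB := valid_family_profile B_neq0 B0.
have tB : map (fun S => t @: S) (enum B) =i relabel t B.
  by move=> S; apply/mapP/imsetP => -[W]; rewrite ?mem_enum => WB ->; exists W; rewrite ?mem_enum.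
have tB_neq0 : relabel t B != set0.
  by have [S SB] := set0Pn _ B_neq0; apply/set0Pn; exists (t @: S); apply: imset_f.
have tB0 : set0 \notin relabel t B by rewrite mem_relabel imset0.
rewrite -(@f_family_seq_profile 1 _ _ _ _ tB) ?map_inj_uniq ?enum_uniq //; last first.
  by apply: imset_inj; exact: perm_inj.
apply: f_neutral vB (valid_seq_profile_of_set _ tB _ _) _ => //; split.
  by move=> v; rewrite mem_seq_profile_map.
exact: fnd_seq_profile_map.
Qed.

Lemma f_family_setU B1 B2 : [disjoint B1 & B2] ->
  B1 != set0 -> set0 \notin B1 -> B2 != set0 -> set0 \notin B2 ->
  f (family_profile B1) :&: f (family_profile B2) != set0 ->
  f (family_profile (B1 :|: B2)) = f (family_profile B1) :&: f (family_profile B2).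
Proof.
move=> B12 B1_neq0 B10 B2_neq0 B20 cap.
have e12 : enum B1 ++ enum B2 =i B1 :|: B2 by move=> S; rewrite mem_cat !mem_enum inE.
have B12_neq0 : B1 :|: B2 != set0.
  by have [S SB1] := set0Pn _ B1_neq0; apply/set0Pn; exists S; rewrite inE SB1.
have B120 : set0 \notin B1 :|: B2 by rewrite inE negb_or B10.
have uniq12 : uniq (enum B1 ++ enum B2).
  rewrite cat_uniq !enum_uniq andbT; apply/hasPn => S.
  by rewrite !mem_enum => /(disjointFl B12) ->.
rewrite -(@f_family_seq_profile 1 _ _ _ uniq12 e12) //.
rewrite -(@f_family_seq_profile (1 + size (enum B1)) _ _ _ _ (mem_enum B2)) ?enum_uniq // in cap *.
apply: f_consistent (seq_profile_cat 1 _ _) cap.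
- exact: valid_family_profile.
- exact: valid_seq_profile_of_set (mem_enum B2) _ _.
- exact: valid_seq_profile_of_set e12 _ _.
Qed.

Lemma f_seq_profile_shrink L (g : {set 'I_m} -> {set 'I_m}) W :
  L != [::] -> set0 \notin L -> set0 \notin map g L ->
  (forall S, S \in L -> g S \subset S /\ W :&: g S = W :&: S) ->
  W \in f (seq_profile 1 L) -> W \in f (seq_profile 1 (map g L)).
Proof.
move=> L_nil L0 gL0 gS; apply: f_indep.
- exact: valid_seq_profile.
- by apply: valid_seq_profile; rewrite // -size_eq0 size_map size_eq0.
- by move=> v; rewrite mem_seq_profile_map.
- move=> i S S' LS; rewrite (fnd_seq_profile_map g LS) => -[<-].
  exact/gS/(seq_profile_ballot LS).
Qed.

Lemma relabel_invariant_eq_comm X : X \subset comm -> X != set0 ->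
  (forall t, relabel t X = X) -> X = comm.
Proof.
move=> X_comm /set0Pn[W WX] X_inv; apply/eqP; rewrite eqEsubset X_comm /=.
apply/subsetP => W' W'comm; have := subsetP X_comm _ WX.
rewrite !inE in W'comm * => /eqP cW.
have [t [tW _]] := exists_perm_im (etrans cW (esym (eqP W'comm))).
by rewrite -(X_inv t) mem_relabel -tW im_permK.
Qed.

Lemma stabilizer_invariant_mem X x W W' :
  (forall t : {perm 'I_m}, t x = x -> relabel t X = X) ->
  #|W| = #|W'| -> (x \in W) = (x \in W') -> (W \in X) = (W' \in X).
Proof.
move=> X_inv cW xW; have [t [tW tx]] := exists_perm_im cW.
by rewrite -{2}(X_inv t (tx _ xW)) mem_relabel -tW im_permK.
Qed.

Definition comm_with x := [set W in comm | x \in W].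
Definition comm_without x := [set W in comm | x \notin W].

Lemma stabilizer_invariant_cases X x : X \subset comm -> X != set0 ->
  (forall t : {perm 'I_m}, t x = x -> relabel t X = X) ->
  [\/ X = comm_with x, X = comm_without x | X = comm].
Proof.
move=> X_comm X_neq0 X_inv.
have [Win Win_comm xWin] := exists_comm_mem x.
have [Wout Wout_comm xWout] := exists_comm_notin x.
have XE : X = [set W in comm | if x \in W then Win \in X else Wout \in X].
  apply/setP => W; rewrite inE; case Wc: (W \in comm); last first.
    by apply: contraFF Wc => /(subsetP X_comm).
  move: Wc Win_comm Wout_comm; rewrite !inE => /eqP cW /eqP cWin /eqP cWout.
  by case: ifP => xW; apply: (stabilizer_invariant_mem X_inv);
    rewrite ?cW ?cWin ?cWout ?xW ?xWin ?(negPf xWout).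
case: (boolP (Win \in X)) => WinX; case: (boolP (Wout \in X)) => WoutX.
- constructor 3; rewrite XE WinX WoutX.
  by apply/setP => W; rewrite !inE; case: (x \in W); rewrite ?andbT.
- constructor 1; rewrite XE WinX (negPf WoutX).
  by apply/setP => W; rewrite !inE; case: (x \in W); rewrite ?andbT ?andbF.
- constructor 2; rewrite XE WoutX (negPf WinX).
  by apply/setP => W; rewrite !inE; case: (x \in W); rewrite ?andbT ?andbF.
- by case/set0Pn: X_neq0 => W; rewrite XE !inE (negPf WinX) (negPf WoutX); case: ifP; rewrite andbF.
Qed.

Definition ballots_with x r := [set S : {set 'I_m} | (#|S| == r) && (x \in S)].
Definition ballots_without x r := [set S : {set 'I_m} | (#|S| == r) && (x \notin S)].
Definition ballots_card r := [set S : {set 'I_m} | #|S| == r].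

Definition f_with x r := f (family_profile (ballots_with x r)).
Definition f_without x r := f (family_profile (ballots_without x r)).

Lemma set0_notin_card_pred (P : pred {set 'I_m}) r :
  0 < r -> set0 \notin [set S : {set 'I_m} | (#|S| == r) && P S].
Proof. by rewrite inE cards0; case: r. Qed.

Lemma ballots_with_neq0 x r : 0 < r <= m -> ballots_with x r != set0.
Proof.
by move=> rb; have [S cS xS] := exists_card_mem x rb; apply/set0Pn; exists S; rewrite inE cS eqxx.
Qed.

Lemma ballots_without_neq0 x r : r <= m - 1 -> ballots_without x r != set0.
Proof.
by move=> rb; have [S cS xS] := exists_card_notin x rb; apply/set0Pn; exists S; rewrite inE cS eqxx.
Qed.

Lemma ballots_card_neq0 r : 0 < r <= m -> ballots_card r != set0.
Proof.
move=> rb; have [S cS _] := exists_card_mem (Ordinal (ltnW m_ge2)) rb.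
by apply/set0Pn; exists S; rewrite inE cS.
Qed.

Lemma relabel_ballots_with t x r : relabel t (ballots_with x r) = ballots_with (t x) r.
Proof. by apply/setP => S; rewrite mem_relabel !inE card_im_perm mem_im_perm invgK. Qed.

Lemma relabel_ballots_without t x r : relabel t (ballots_without x r) = ballots_without (t x) r.
Proof. by apply/setP => S; rewrite mem_relabel !inE card_im_perm mem_im_perm invgK. Qed.

Lemma relabel_ballots_card t r : relabel t (ballots_card r) = ballots_card r.
Proof. by apply/setP => S; rewrite mem_relabel !inE card_im_perm. Qed.

Lemma set0_notin_ballots_card r : 0 < r -> set0 \notin ballots_card r.
Proof. by rewrite inE cards0; case: r. Qed.

Lemma f_with_relabel t x r : 0 < r <= m -> f_with (t x) r = relabel t (f_with x r).
Proof.
move=> rb; have r_gt0 : 0 < r by case/andP: rb.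
by rewrite /f_with -relabel_ballots_with f_family_relabel ?ballots_with_neq0 ?set0_notin_card_pred.
Qed.

Lemma f_without_relabel t x r : 0 < r <= m - 1 -> f_without (t x) r = relabel t (f_without x r).
Proof.
move=> rb; have r_gt0 : 0 < r by case/andP: rb.
rewrite /f_without -relabel_ballots_without f_family_relabel ?set0_notin_card_pred //.
by apply: ballots_without_neq0; case/andP: rb.
Qed.

Lemma f_ballots_card r : 0 < r <= m -> f (family_profile (ballots_card r)) = comm.
Proof.
move=> rb; have r_gt0 : 0 < r by case/andP: rb.
have v := valid_family_profile (ballots_card_neq0 rb) (set0_notin_ballots_card r_gt0).
apply: relabel_invariant_eq_comm; [exact: f_sub_comm | exact: f_neq0 | move=> t].
rewrite -f_family_relabel ?relabel_ballots_card ?ballots_card_neq0 //.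
exact: set0_notin_ballots_card.
Qed.

Lemma f_with_cap_without x r : 0 < r <= m - 1 ->
  f_with x r :&: f_without x r != set0 -> f_with x r :&: f_without x r = comm.
Proof.
move=> rb cap; have r_gt0 : 0 < r by case/andP: rb.
have rm : 0 < r <= m by lia.
rewrite -f_family_setU ?ballots_with_neq0 ?ballots_without_neq0 ?set0_notin_card_pred //.
- rewrite -(f_ballots_card rm); congr (f (family_profile _)).
  by apply/setP => S; rewrite !inE -andb_orr orbN andbT.
- rewrite -setI_eq0; apply/eqP/setP => S.
  by rewrite !inE; case: (x \in S); rewrite ?andbF.
- by case/andP: rb.
Qed.

Lemma f_with_full x : f_with x m = comm.
Proof.
rewrite /f_with; have -> : ballots_with x m = ballots_card m.
  apply/setP => S; rewrite !inE andb_idr // => /eqP cS.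
  by rewrite (@eq_setT_card _ S) ?cS ?inE.
by apply: f_ballots_card; lia.
Qed.

Lemma f_with_of_Axr x r A : valid_profile A -> is_Axr x r A -> f A = f_with x r.
Proof.
move=> vA [A_uniq A_ballots]; apply: f_distinct_ballots => // S.
by rewrite A_ballots inE; split=> [[-> ->]|/andP[/eqP -> ->]]; rewrite ?eqxx.
Qed.

Lemma f_without_of_Anxr x r A : valid_profile A -> is_Anxr x r A -> f A = f_without x r.
Proof.
move=> vA [A_uniq A_ballots]; apply: f_distinct_ballots => // S.
by rewrite A_ballots inE; split=> [[-> ->]|/andP[/eqP -> ->]]; rewrite ?eqxx.
Qed.

Lemma f_with_drop x r W : 1 < r <= m -> W \in f_with x r -> x \notin W ->
  W \in f_without x r.-1.
Proof.
move=> rb Wx xW; pose drop S := S :\ x.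
have drop_inj : {in enum (ballots_with x r) &, injective drop}.
  move=> S T; rewrite !mem_enum !inE => /andP[_ xS] /andP[_ xT] eST.
  by rewrite -(setD1K xS) -(setD1K xT); congr (_ |: _).
have dropE : map drop (enum (ballots_with x r)) =i ballots_without x r.-1.
  move=> S; apply/mapP/idP => [[T] |].
    rewrite mem_enum !inE => /andP[/eqP cT xT] ->.
    rewrite !inE eqxx /= andbT; apply/eqP.
    by move: (cardsD1 x T); rewrite xT cT /drop => ->.
  rewrite inE => /andP[/eqP cS xS]; exists (x |: S); last by rewrite /drop setU1K.
  by rewrite mem_enum !inE eqxx orTb andbT cardsU1 xS cS /=; apply/eqP; lia.
rewrite /f_without -(@f_family_seq_profile 1 _ _ _ _ dropE) ?map_inj_in_uniq ?enum_uniq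
  ?ballots_without_neq0 ?set0_notin_card_pred //; try lia.
apply: f_seq_profile_shrink Wx.
- by rewrite enum_eq_nil ballots_with_neq0 //; lia.
- by rewrite mem_enum set0_notin_card_pred //; lia.
- by rewrite dropE set0_notin_card_pred //; lia.
- move=> S _; split; first exact: subD1set.
  by apply/setP => z; rewrite !inE; case: eqVneq => // ->; rewrite (negPf xW).
Qed.

Lemma f_single_sub_comm S : S != set0 -> f_single S \subset comm.
Proof. by move=> S0; apply/f_sub_comm/valid_seq_profile1. Qed.

Lemma f_single_neq0 S : S != set0 -> f_single S != set0.
Proof. by move=> S0; apply/f_neq0/valid_seq_profile1. Qed.

Lemma f_single_family S : f_single S = f (family_profile [set S]).
Proof. by rewrite /family_profile enum_set1. Qed.

(* Shrinking each ballot of [A^{x,r}] other than [S] and not inside [W] by a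
   candidate outside [W] keeps [W] winning, by independence of losers.  The
   shrunk ballots are ties, so by consistency the new outcome is the
   intersection of the [f_single T] over the remaining ballots, which [W']
   shows to be nonempty. *)
Lemma mem_f_single_of_witness x r S W W' : 1 < r <= m ->
    (forall U, #|U| = r.-1 -> f_single U = comm) -> f_with x r = comm ->
    S \in ballots_with x r -> W \in comm -> W' \in comm ->
    (forall T, T \in ballots_with x r -> (T == S) || (T \subset W) -> W' \in f_single T) ->
  W \in f_single S.
Proof.
move=> rb small_comm fx_comm SB Wc W'c W'T.
pose kept T := (T == S) || (T \subset W).
pose g T := if kept T then T else drop_outside W T.
have cardB T : T \in ballots_with x r -> #|T| = r by rewrite inE => /andP[/eqP].
have card_g T : T \in ballots_with x r -> ~~ kept T -> #|g T| = r.-1.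
  move=> TB nkT; rewrite /g (negPf nkT) card_drop_outside ?cardB //.
  by apply: contra nkT => TW; rewrite /kept TW orbT.
have gB0 : set0 \notin map g (enum (ballots_with x r)).
  apply/mapP => -[T]; rewrite mem_enum => TB /esym/eqP; rewrite -cards_eq0.
  case: (boolP (kept T)) => kT; last by rewrite card_g //; lia.
  by rewrite /g kT cardB //; lia.
have Wg : W \in f (seq_profile 1 (map g (enum (ballots_with x r)))).
  apply: f_seq_profile_shrink; rewrite ?enum_eq_nil ?ballots_with_neq0 ?mem_enum //; try lia.
  - by rewrite set0_notin_card_pred //; lia.
  - move=> T _; rewrite /g; case: ifP => _; first by rewrite subxx.
    by rewrite drop_outside_sub setI_drop_outside.
  - by rewrite -/(f_with x r) fx_comm.
have g_nil : map g (enum (ballots_with x r)) != [::].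
  by rewrite -size_eq0 size_map size_eq0 enum_eq_nil; apply: ballots_with_neq0; lia.
have cap_neq0 : \bigcap_(U <- map g (enum (ballots_with x r))) f_single U != set0.
  apply/set0Pn; exists W'; rewrite bigcap_seq; apply/bigcapP => U /mapP[T].
  rewrite mem_enum => TB ->; case: (boolP (kept T)) => kT.
    by rewrite /g kT; apply: W'T.
  by rewrite small_comm ?card_g.
rewrite f_seq_profile_bigcap // bigcap_seq in Wg.
have gS : g S = S by rewrite /g /kept eqxx.
by move/bigcapP: Wg; apply; rewrite -gS map_f ?mem_enum.
Qed.

Section CardinalityStep.
Variable r : nat.
Hypotheses (r_bounds : 1 < r <= m - 1)
  (small_comm : forall U, #|U| = r.-1 -> f_single U = comm)
  (f_with_comm : forall x, f_with x r = comm).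

Lemma mem_f_single_notsub S W : #|S| = r -> W \in comm -> ~~ (S \subset W) ->
  W \in f_single S.
Proof.
move=> cS Wc /subsetPn[x xS xW].
have S0 : S != set0 by apply/set0Pn; exists x.
have [W' W'S] := set0Pn _ (f_single_neq0 S0).
apply: (mem_f_single_of_witness _ small_comm (f_with_comm x) _ Wc (subsetP (f_single_sub_comm S0) _ W'S)).
- by lia.
- by rewrite inE cS eqxx.
move=> T; rewrite inE => /andP[_ xT] /orP[/eqP -> // | TW].
by move: xW; rewrite (subsetP TW x xT).
Qed.

Lemma f_single_card S : #|S| = r -> f_single S = comm.
Proof.
move=> cS; have S0 : S != set0 by rewrite -cards_eq0 cS; lia.
apply/eqP; rewrite eqEsubset f_single_sub_comm //; apply/subsetP => W Wc.
have [SW|/(mem_f_single_notsub cS Wc)//] := boolP (S \subset W).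
have [x xS] := set0Pn _ S0.
have [W' W'c xW'] := exists_comm_notin x.
apply: (mem_f_single_of_witness _ small_comm (f_with_comm x) _ Wc W'c).
- by lia.
- by rewrite inE cS eqxx.
move=> T; rewrite inE => /andP[/eqP cT xT] _; apply: mem_f_single_notsub => //.
by apply/subsetPn; exists x.
Qed.

End CardinalityStep.

Lemma f_single_comm : (forall x r, 0 < r <= m - 1 -> f_with x r = comm) ->
  forall S, S != set0 -> f_single S = comm.
Proof.
move=> with_comm.
have sized r : 0 < r <= m - 1 -> forall S, #|S| = r -> f_single S = comm.
  elim: r => [|[|r] IH] rb S cS; first by lia.
    have /cards1P[y ->] : #|S| == 1 by rewrite cS.
    rewrite f_single_family -(with_comm y 1) //; congr (f (family_profile _)).
    apply/setP => T; rewrite !inE; apply/eqP/andP => [->|[/cards1P[z ->]]].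
      by rewrite cards1 set11.
    by rewrite inE => /eqP ->.
  apply: f_single_card cS; first by lia.
    by move=> U cU; apply: IH cU; lia.
  by move=> x; apply: with_comm; lia.
move=> S S0; have [Sm|mS] := ltnP #|S| m.
  by apply: sized (erefl _); rewrite lt0n cards_eq0 S0; lia.
rewrite (eq_setT_card mS) f_single_family -(@f_ballots_card m) //; last by lia.
congr (f (family_profile _)); apply/setP => T; rewrite !inE.
apply/eqP/eqP => [->|cT]; first by rewrite cardsT card_ord.
by apply: eq_setT_card; rewrite cT.
Qed.

Lemma comm_neq0 : comm != set0.
Proof. by have [W Wc _] := exists_comm_mem (Ordinal (ltnW m_ge2)); apply/set0Pn; exists W. Qed.

Lemma f_eq_comm : (forall S, S != set0 -> f_single S = comm) ->
  forall A, valid_profile A -> f A = comm.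
Proof.
move=> single_comm A vA; case: (vA) => -[i iA] _.
have iB : odflt set0 A.[? i] \in ballots A by apply: map_f.
have bigcapE : \bigcap_(S <- ballots A) f_single S = comm.
  apply/setP => W; rewrite bigcap_seq; apply/bigcapP/idP => [/(_ _ iB)|Wc S SB].
    by rewrite single_comm // (ballots_neq0 vA iB).
  by rewrite single_comm // (ballots_neq0 vA SB).
rewrite f_ballots // f_seq_profile_bigcap ?bigcapE ?comm_neq0 //.
  by case: (ballots A) iB.
by apply/negP => /(ballots_neq0 vA); rewrite eqxx.
Qed.

Lemma relabel_comm t : relabel t comm = comm.
Proof. by apply/setP => W; rewrite mem_relabel !inE card_im_perm. Qed.

Lemma relabel_comm_with t x : relabel t (comm_with x) = comm_with (t x).
Proof. by apply/setP => W; rewrite mem_relabel !inE card_im_perm mem_im_perm invgK. Qed.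

Lemma relabel_comm_without t x : relabel t (comm_without x) = comm_without (t x).
Proof. by apply/setP => W; rewrite mem_relabel !inE card_im_perm mem_im_perm invgK. Qed.

Lemma f_with_comm_of_without x r : 0 < r <= m - 1 ->
    ~ (f_with x r = comm_with x /\ f_without x r = comm_without x) ->
    comm_without x \subset f_without x r ->
  f_with x r = comm.
Proof.
move=> rb not_sep out_sub; have rm : 0 < r <= m by lia.
have vw : valid_profile (family_profile (ballots_with x r)).
  by apply: valid_family_profile; [apply: ballots_with_neq0 | apply: set0_notin_card_pred]; lia.
have vwo : valid_profile (family_profile (ballots_without x r)).
  by apply: valid_family_profile; [apply: ballots_without_neq0 | apply: set0_notin_card_pred]; lia.
have meet_comm W : W \in f_with x r -> W \in f_without x r -> f_with x r = comm.
  move=> Wx Wxo; have /f_with_cap_without capE : f_with x r :&: f_without x r != set0.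
    by apply/set0Pn; exists W; rewrite inE Wx.
  apply/eqP; rewrite eqEsubset f_sub_comm //= -capE ?subsetIl //.
have [Win Win_comm xWin] := exists_comm_mem x.
have [Wout Wout_comm xWout] := exists_comm_notin x.
have Win_with : Win \in comm_with x by rewrite inE Win_comm.
have Wout_fwo : Wout \in f_without x r by apply: (subsetP out_sub); rewrite inE Wout_comm.
have stab t : t x = x -> relabel t (f_with x r) = f_with x r.
  by move=> tx; rewrite -f_with_relabel // tx.
case: (@stabilizer_invariant_cases (f_with x r) x (f_sub_comm vw) (f_neq0 vw) stab) => [fw | fw | //].
- have stabo t : t x = x -> relabel t (f_without x r) = f_without x r.
    by move=> tx; rewrite -f_without_relabel // tx.
  case: (@stabilizer_invariant_cases (f_without x r) x (f_sub_comm vwo) (f_neq0 vwo) stabo) => fwo.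
  + by apply: (meet_comm Win); rewrite ?fw ?fwo.
  + by case: not_sep.
  + by apply: (meet_comm Win); rewrite ?fw ?fwo.
- by apply: (meet_comm Wout); rewrite // fw inE Wout_comm.
Qed.

Lemma f_with_comm_all x :
    (forall r, 0 < r <= m - 1 -> ~ (f_with x r = comm_with x /\ f_without x r = comm_without x)) ->
  forall r, 0 < r <= m -> f_with x r = comm.
Proof.
move=> not_sep; suff down d : d < m -> f_with x (m - d) = comm.
  by move=> r rb; rewrite -(subKn (_ : r <= m)); [apply: down | ]; lia.
elim: d => [|d IH] dm; first by rewrite subn0 f_with_full.
apply: f_with_comm_of_without; [lia | apply: not_sep; lia |].
apply/subsetP => W; rewrite inE => /andP[Wc xW].
have := @f_with_drop x (m - d) W; rewrite (_ : (m - d).-1 = m - d.+1); last by lia.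
by apply => //; [lia | rewrite IH //; lia].
Qed.

Theorem exists_separating_ballot_size : nontrivial k f ->
  exists r, [/\ 1 <= r <= m - 1,
    (forall x A, valid_profile A -> is_Axr x r A -> f A = comm_with x) &
    (forall x A, valid_profile A -> is_Anxr x r A -> f A = comm_without x)].
Proof.
case=> P [vP fP]; pose x0 : 'I_m := Ordinal (ltnW m_ge2).
have [/existsP[r /and3P[r_gt0 /eqP fw /eqP fwo]] | /existsPn not_sep] := boolP
  [exists r : 'I_m, [&& 0 < r, f_with x0 r == comm_with x0 & f_without x0 r == comm_without x0]].
  have rb : 0 < r <= m - 1 by rewrite r_gt0; have := ltn_ord r; lia.
  exists r; split=> // x A vA AB.
    by rewrite (f_with_of_Axr vA AB) -(tpermL x0 x) f_with_relabel ?fw ?relabel_comm_with //; lia.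
  by rewrite (f_without_of_Anxr vA AB) -(tpermL x0 x) f_without_relabel ?fwo ?relabel_comm_without.
have no_sep r : 0 < r <= m - 1 ->
    ~ (f_with x0 r = comm_with x0 /\ f_without x0 r = comm_without x0).
  move=> rb [fw fwo]; have rm : r < m by lia.
  by have := not_sep (Ordinal rm); rewrite /= fw fwo !eqxx andbT (proj1 (andP rb)).
have with_comm x r : 0 < r <= m - 1 -> f_with x r = comm.
  move=> rb; rewrite -(tpermL x0 x) f_with_relabel ?(f_with_comm_all no_sep) ?relabel_comm //; lia.
by case: fP; apply: f_eq_comm vP; apply: f_single_comm.
Qed.

End Rule.

Theorem mainTheorem14 (m k : nat) (f : profile m -> {set {set 'I_m}}) :
  2 <= m -> 1 <= k <= m - 1 ->
  is_ABC_rule k f -> nontrivial k f ->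
  anonymous f -> neutral f -> consistent f -> continuous f -> indep_losers f ->
  exists r, [/\ 1 <= r <= m - 1,
    (forall (x : 'I_m) (A : profile m), valid_profile A -> is_Axr x r A ->
       f A = [set W in committees m k | x \in W]) &
    (forall (x : 'I_m) (A : profile m), valid_profile A -> is_Anxr x r A ->
       f A = [set W in committees m k | x \notin W])].
Proof.
move=> m_ge2 k_bounds f_ABC f_nontrivial f_anon f_neutral f_consistent _ f_indep.
exact: exists_separating_ballot_size.
Qed.
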